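(* Assume the Setup (for a single $n$). Fix an even integer $r\ge0$. Let $\mathcal T\subset U$ and $o\in V$ be such that $\mathbb P^H(\mathcal T)>0$ and $B_{\mathcal T}(o,r)$ is a valid rooted tree $(T,o)$ with $|V(T)|<d$. Then the height of $T$ equals $r$ and $m(I(T),T)>0$.
   Context: Setup. $k\ge 1$ is an integer and $d$ a positive integer. $G=(V,U,E)$ is a finite simple bipartite graph with parts $V$ and $U$ and edge set $E$, which is $C_4$-free (any two distinct vertices have at most one common neighbour) and $(d,k+1)$-bi-regular (every $v\in V$ has degree $d$ and every $u\in U$ has degree $k+1$). $B$ is a signed adjacency matrix of $G$: the real $V\times U$ matrix with $B_{v,u}\in\{1,-1\}$ if $vu\in E$ and $B_{v,u}=0$ otherwise. $H\subset\mathbb R^U$ is the row space of $B$ and $P_H$ the orthogonal projection onto $H$. The determinantal measure $\mathbb P^H$ is the probability measure on subsets $\mathcal S\subset U$ of size $\operatorname{rank}B$ given by $\mathbb P^H(\mathcal S)=\det(P_H|_{\mathcal S})$, where $P_H|_{\mathcal S}$ is the principal submatrix indexed by $\mathcal S$. For $\mathcal S\subset U$, $G[\mathcal S]$ denotes the subgraph of $G$ induced by $\mathcal S\cup N_G(\mathcal S)$. For $v\in V$ and an integer $r\ge 0$, $B_{\mathcal S}(v,r)$ denotes the rooted ball of radius $r$ around $v$ in $G[\mathcal S]$ (rooted at $v$). Trees. For a finite rooted tree $(T,o)$, the height of a vertex is its distance from $o$ and the height of $T$ is the maximal height of a vertex. Vertices of even (odd) height are called even (odd); $V(T)$ and $U(T)$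 denote the sets of even and odd vertices. $(T,o)$ is valid if its height is even and every odd vertex has degree exactly $k+1$ in $T$. $I(T)\subset V(T)$ is the set of even vertices of height strictly smaller than the height of $T$. For $K\subset V(T)$, $m(K,T)$ is the number of matchings of $T$ in which every vertex of $K\cup U(T)$ is saturated. *)

From HB Require Import structures.
From mathcomp Require Import all_boot all_order all_algebra.
Set Implicit Arguments. Unset Strict Implicit. Unset Printing Implicit Defensive.
Import Order.TTheory GRing.Theory Num.Theory.

Section Graphs.
Variable A : finType.

Fixpoint nball (adj : rel A) (o : A) (n : nat) : {set A} :=
  match n with
  | 0 => [set o]
  | n'.+1 => let B := nball adj o n' in
             B :|: [set y | [exists x in B, adj x y]]
  end.

(* graph distance from o to x (= #|A| if x is unreachable) *)
Definition gdist (adj : rel A) (o x : A) : nat :=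
  find (fun i => x \in nball adj o i) (iota 0 #|A|).

Definition has_cycle (adj : rel A) (S : {set A}) : Prop :=
  exists c : seq A, [/\ uniq c, 2 < size c, {subset c <= S} & cycle adj c].

Definition is_rooted_tree (adj : rel A) (S : {set A}) (o : A) : Prop :=
  [/\ o \in S, forall x, x \in S -> x \in nball adj o #|A| & ~ has_cycle adj S].

Definition theight (adj : rel A) (S : {set A}) (o : A) : nat :=
  \max_(x in S) gdist adj o x.

Definition even_vs (adj : rel A) (S : {set A}) (o : A) : {set A} :=
  [set x in S | ~~ odd (gdist adj o x)].
Definition odd_vs (adj : rel A) (S : {set A}) (o : A) : {set A} :=
  [set x in S | odd (gdist adj o x)].

Definition I_vs (adj : rel A) (S : {set A}) (o : A) : {set A} :=
  [set x in even_vs adj S o | gdist adj o x < theight adj S o].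

Definition tdeg (adj : rel A) (S : {set A}) (x : A) : nat :=
  #|[set y in S | adj x y]|.

Definition valid_tree (k : nat) (adj : rel A) (S : {set A}) (o : A) : Prop :=
  [/\ is_rooted_tree adj S o, ~~ odd (theight adj S o) &
      forall x, x \in odd_vs adj S o -> tdeg adj S x = k.+1].
End Graphs.

Section Bipartite.
Variables (V U : finType).
Notation A := (V + U)%type.

Definition adj_sub (E : V -> U -> bool) (S : {set U}) : rel A :=
  fun x y => match x, y with
             | inl v, inr u => E v u && (u \in S)
             | inr u, inl v => E v u && (u \in S)
             | _, _ => false
             end.

Definition ball_vs (E : V -> U -> bool) (S : {set U}) (o : V) (r : nat) : {set A} :=
  nball (adj_sub E S) (inl o) r.
Definition ball_adj (E : V -> U -> bool) (S : {set U}) (o : V) (r : nat) : rel A :=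
  fun x y => [&& adj_sub E S x y, x \in ball_vs E S o r & y \in ball_vs E S o r].

Definition is_matching (adj : rel A) (M : {set V * U}) : bool :=
  [forall e in M, adj (inl e.1) (inr e.2)] &&
  [forall e in M, forall e' in M, (e != e') ==> (e.1 != e'.1) && (e.2 != e'.2)].

Definition saturates (M : {set V * U}) (x : A) : bool :=
  [exists e in M, (inl e.1 == x) || (inr e.2 == x)].

(* m(K,T): number of matchings of T saturating every vertex of K ∪ U(T) *)
Definition mcount (adj : rel A) (S : {set A}) (o : A) (K : {set A}) : nat :=
  #|[set M : {set V * U} | is_matching adj M &&
       [forall x in K :|: odd_vs adj S o, saturates M x]]|.
End Bipartite.

Local Open Scope ring_scope.

Definition signed_adj (R : realFieldType) n m (E : 'I_n -> 'I_m -> bool)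
  (B : 'M[R]_(n, m)) : Prop :=
  forall i j, if E i j then B i j = 1 \/ B i j = -1 else B i j = 0.

Definition orth_proj_rowspace (R : realFieldType) n m (B : 'M[R]_(n, m))
  (P : 'M[R]_m) : Prop :=
  [/\ P^T = P, P *m P = P & (P == B)%MS].

Definition principal_sub (R : realFieldType) m (P : 'M[R]_m) (S : {set 'I_m}) :
  'M[R]_#|S| :=
  \matrix_(i < #|S|, j < #|S|) P (@enum_val _ (mem S) i) (@enum_val _ (mem S) j).

(* determinantal measure P^H(S) (zero on sets of size <> rank B) *)
Definition detmeas (R : realFieldType) n m (B : 'M[R]_(n, m)) (P : 'M[R]_m)
  (S : {set 'I_m}) : R :=
  if #|S| == \rank B then \det (principal_sub P S) else 0.

(* Let [A] be the submatrix of [B] formed by the columns of the [U]-vertices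
   of the ball.  Since the principal minor [P|_T] is invertible and
   [#|T| = rank B], the columns of [B] indexed by [T] are independent and a
   combination of rows of [B] vanishing on [T] vanishes altogether.  Hence the
   columns of [A] are independent, and, by C4-freeness and [d]-regularity, so
   are its rows indexed by at most [d] [V]-vertices of the ball of height less
   than [r].  Extending such a set of rows to a row basis of [A] and picking a
   nonzero term of the resulting square determinant yields a matching of all
   [U]-vertices of the ball that covers the chosen [V]-vertices.  If the tree
   had height less than [r], all its [V]-vertices could be covered, which is
   impossible since a tree whose odd vertices have degree [k + 1 >= 2] has
   more even than odd vertices.  So the height is [r], and covering [I(T)]
   gives a matching counted by [m(I(T), T)]. *)

From HB Require Import structures.
From mathcomp Require Import all_boot all_order all_algebra.
From mathcomp Require Import fingroup perm zify.
Import Order.TTheory GRing.Theory Num.Theory.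

Set Implicit Arguments. Unset Strict Implicit. Unset Printing Implicit Defensive.

Section Distance.
Variables (A : finType) (adj : rel A) (o : A).
Local Notation nb := (nball adj o).
Local Notation gd := (gdist adj o).

Lemma nballS i x : (x \in nb i.+1) = (x \in nb i) || [exists y in nb i, adj y x].
Proof. by rewrite /= !inE. Qed.

Lemma nball_subS i : nb i \subset nb i.+1.
Proof. exact: subsetUl. Qed.

Lemma nball_mono i j : i <= j -> nb i \subset nb j.
Proof.
move/subnK => <-; elim: (j - i) => [|t IH]; first exact: subxx.
by rewrite addSn; apply: subset_trans IH (nball_subS _).
Qed.

(* A strictly increasing chain of subsets of [A] stabilises before step [#|A|]. *)
Lemma nball_bounded i x : x \in nb i -> exists2 j, j < #|A| & x \in nb j.
Proof.
have [j ltjA nbj] : exists2 j, j < #|A| & nb j.+1 \subset nb j.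
  have [/existsP [j nbj]|/existsPn nostab] :=
    boolP [exists j : 'I_#|A|, nb j.+1 \subset nb j]; first by exists j.
  suff: #|A| < #|nb #|A| | by rewrite ltnNge max_card.
  elim: {1 3 4}#|A| (leqnn #|A|) => [|t IH] ltt.
    by rewrite /= cards1.
  apply: leq_ltn_trans (IH (ltnW ltt)) (proper_card _).
  by rewrite properE nball_subS (nostab (Ordinal ltt)).
have nb_sub k : nb k \subset nb j.
  elim: k => [|k IH]; first exact: nball_mono.
  apply/subsetP => y; rewrite nballS => /orP [/(subsetP IH) //|yk].
  apply: (subsetP nbj); rewrite nballS; apply/orP; right.
  by case/exists_inP: yk => z /(subsetP IH) zj zy; apply/exists_inP; exists z.
by move=> xi; exists j => //; apply: (subsetP (nb_sub i)).
Qed.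

Definition reachable x := exists i, x \in nb i.

Lemma gdist_in x : reachable x -> x \in nb (gd x).
Proof.
case=> i /nball_bounded [j ltjA xj].
have hs : has (fun i => x \in nb i) (iota 0 #|A|).
  by apply/hasP; exists j => //; rewrite mem_iota.
have := nth_find 0 hs; rewrite nth_iota //.
by move: hs; rewrite has_find size_iota.
Qed.

Lemma gdist_le x i : x \in nb i -> gd x <= i.
Proof.
move=> xi; have [j ltjA xj] := nball_bounded xi.
rewrite leqNgt; apply/negP => lt.
have := before_find 0 lt; rewrite nth_iota ?add0n ?xi //.
apply: (leq_trans lt); rewrite /gdist.
by have := find_size (fun i => x \in nb i) (iota 0 #|A|); rewrite size_iota.
Qed.

Lemma gdist_root : gd o = 0.
Proof. by apply/eqP; rewrite -leqn0; apply: gdist_le; rewrite inE. Qed.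

Lemma gdist_eq0 x : reachable x -> gd x = 0 -> x = o.
Proof. by move=> /gdist_in + e; rewrite e inE => /eqP. Qed.

Lemma gdist_adj x y : reachable y -> adj y x -> gd x <= (gd y).+1.
Proof.
move=> ry yx; apply: gdist_le; rewrite nballS; apply/orP; right.
by apply/existsP; exists y; rewrite gdist_in.
Qed.

Lemma gdist_pred x : reachable x -> 0 < gd x ->
  exists y, [/\ reachable y, adj y x & (gd y).+1 = gd x].
Proof.
move=> rx gx; have := gdist_in rx; rewrite -(prednK gx) nballS.
case/orP => [|/existsP [y /andP [yi yx]]].
  by move/gdist_le; rewrite -ltnS prednK // ltnn.
have ry : reachable y by exists (gd x).-1.
exists y; split => //; apply/eqP; rewrite eqn_leq -{1}(prednK gx) ltnS gdist_le //=.
by rewrite prednK //; apply: gdist_adj.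
Qed.

End Distance.

Lemma path_map_iota (T : Type) (e : rel T) (g : nat -> T) m k :
  (forall i, m <= i < m + k -> e (g i) (g i.+1)) ->
  path e (g m) [seq g i | i <- iota m.+1 k] /\
  last (g m) [seq g i | i <- iota m.+1 k] = g (m + k).
Proof.
elim: k m => [|k IH] m gE; first by rewrite addn0.
have [|p l] := IH m.+1.
  by move=> i /andP [ltmi lti]; apply: gE; rewrite (ltnW ltmi) -addSnnS.
rewrite /= p l addSnnS andbT; split => //.
by apply: gE; rewrite leqnn addnS ltnS leq_addr.
Qed.

Section Ball.
Variables (V U : finType) (E : V -> U -> bool) (T : {set U}) (o : V) (r : nat).
Local Notation adjT := (adj_sub E T).
Local Notation adjB := (ball_adj E T o r).
Local Notation S := (ball_vs E T o r).
Local Notation gd := (gdist adjB (inl o)).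

Definition is_inr (x : V + U) := if x is inr _ then true else false.

Lemma adj_sub_sym : symmetric adjT.
Proof. by case=> [?|?] [?|?]. Qed.

Lemma ball_adj_sym : symmetric adjB.
Proof. by move=> x y; rewrite /ball_adj adj_sub_sym [(x \in _) && _]andbC. Qed.

Lemma adj_sub_is_inr x y : adjT x y -> is_inr x != is_inr y.
Proof. by case: x y => [?|?] [?|?]. Qed.

Lemma ball_adj_sub x y : adjB x y -> adjT x y.
Proof. by case/andP. Qed.

Lemma nball_adj_sub_inr i u : inr u \in nball adjT (inl o) i -> u \in T.
Proof.
elim: i => [|i IH]; first by rewrite inE.
by rewrite nballS => /orP [//|/exists_inP [[v|//] _ /andP []]].
Qed.

Lemma root_in_ball : inl o \in S.
Proof. by apply: (subsetP (nball_mono _ _ (leq0n r))); rewrite inE. Qed.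

Lemma nball_ball_adj_sub i : nball adjB (inl o) i \subset S.
Proof.
elim: i => [|i IH]; first by rewrite sub1set root_in_ball.
apply/subsetP => x; rewrite nballS => /orP [/(subsetP IH) //|].
by case/exists_inP => y _ /and3P [].
Qed.

Lemma nball_ball_adj i : i <= r -> nball adjB (inl o) i = nball adjT (inl o) i.
Proof.
elim: i => [//|i IH] ltir; apply/setP => x.
rewrite !nballS IH ?(ltnW ltir) //; congr (_ || _).
apply/exists_inP/exists_inP => [] [y yi yx]; exists y => //.
  exact: ball_adj_sub.
rewrite /ball_adj yx (subsetP (nball_mono _ _ (ltnW ltir))) //=.
apply: (subsetP (nball_mono _ _ ltir)); rewrite nballS; apply/orP; right.
by apply/exists_inP; exists y.
Qed.

Lemma reachable_ball x : reachable adjB (inl o) x <-> x \in S.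
Proof.
split; first by case=> i /(subsetP (nball_ball_adj_sub i)).
by move=> xS; exists r; rewrite nball_ball_adj.
Qed.

Lemma gdist_ball_le x : x \in S -> gd x <= r.
Proof. by move=> xS; apply: gdist_le; rewrite nball_ball_adj. Qed.

Lemma ball_nbr x y : x \in S -> gd x < r -> adjT x y -> y \in S.
Proof.
move=> xS ltxr xy; apply: (subsetP (nball_mono _ _ ltxr)); rewrite nballS.
apply/orP; right; apply/exists_inP; exists x => //.
by rewrite -nball_ball_adj ?gdist_ball_le // gdist_in //; apply/reachable_ball.
Qed.

Lemma odd_gdist x : x \in S -> odd (gd x) = is_inr x.
Proof.
move=> xS; have [h] := ubnP (gd x); elim: h x xS => // h IH x xS ltxh.
have rx : reachable adjB (inl o) x by apply/reachable_ball.
have [gx0|gx_gt0] := posnP (gd x); first by rewrite gx0 (gdist_eq0 rx gx0).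
have [y [/reachable_ball yS yx eyx]] := gdist_pred rx gx_gt0.
have := adj_sub_is_inr (ball_adj_sub yx).
rewrite -eyx /= (IH y yS); last by rewrite -ltnS eyx.
by case: (is_inr x); case: (is_inr y).
Qed.

Lemma odd_gdist_adj x y : x \in S -> y \in S -> adjB x y -> odd (gd x) != odd (gd y).
Proof. by move=> xS yS /ball_adj_sub /adj_sub_is_inr; rewrite !odd_gdist. Qed.

Lemma theight_ball_le : theight adjB S (inl o) <= r.
Proof. by apply/bigmax_leqP => x xS; apply: gdist_ball_le. Qed.

Lemma card_even_vs_ge (J : {set V}) :
  (forall v, v \in J -> inl v \in S) -> #|J| <= #|even_vs adjB S (inl o)|.
Proof.
move=> JS; rewrite -(card_in_imset (f := @inl V U)); last by move=> x y _ _ [].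
apply/subset_leq_card/subsetP => _ /imsetP [v vJ ->].
by rewrite inE JS // odd_gdist ?JS.
Qed.

Definition parent (z : V + U) : V + U :=
  odflt z [pick y | [&& y \in S, adjB y z & (gd y).+1 == gd z]].

Lemma parentP z : z \in S -> 0 < gd z ->
  [/\ parent z \in S, adjB (parent z) z & (gd (parent z)).+1 = gd z].
Proof.
move=> zS gz_gt0.
have [y [/reachable_ball yS yz eyz]] := gdist_pred (iffRL (reachable_ball z) zS) gz_gt0.
rewrite /parent; case: pickP => [y' /and3P [? ? /eqP ?] //|/(_ y)].
by rewrite yS yz eyz eqxx.
Qed.

Definition ancestor i z := iter i parent z.

Lemma ancestorP z i : z \in S -> i <= gd z ->
  ancestor i z \in S /\ gd (ancestor i z) + i = gd z.
Proof.
move=> zS; elim: i => [|i IH] lti; first by rewrite addn0.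
have [aS ea] := IH (ltnW lti).
have [|pS _ ep] := parentP aS; first by lia.
by rewrite /ancestor iterS -/(ancestor i z) pS addnS -addSn ep.
Qed.

Lemma ancestor_adj z i : z \in S -> i < gd z -> adjB (ancestor i.+1 z) (ancestor i z).
Proof.
move=> zS lti; have [aS ea] := ancestorP zS (ltnW lti).
by have [|] := parentP aS; first by lia.
Qed.

Lemma ancestor_root z : z \in S -> ancestor (gd z) z = inl o.
Proof.
move=> zS; have [aS ea] := ancestorP zS (leqnn _).
by apply: gdist_eq0; [apply/reachable_ball | lia].
Qed.

Lemma ancestor_meet y1 y2 : y1 \in S -> y2 \in S -> gd y1 = gd y2 -> y1 != y2 ->
  exists j, [/\ 0 < j <= gd y1, ancestor j y1 = ancestor j y2
              & forall i, i < j -> ancestor i y1 != ancestor i y2].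
Proof.
move=> y1S y2S e12 y12.
have meet_root : ancestor (gd y1) y1 == ancestor (gd y1) y2.
  by rewrite ancestor_root // e12 ancestor_root.
have [j /eqP abj jmin] :=
  ex_minnP (ex_intro (fun i => ancestor i y1 == ancestor i y2) _ meet_root).
exists j; split=> //; last first.
  by move=> i ltij; apply: contraTneq ltij => abi; rewrite -leqNgt jmin // abi.
by rewrite jmin // andbT lt0n; apply: contra_neq y12 => j0; rewrite j0 in abj.
Qed.

Hypothesis acyclic : ~ has_cycle adjB S.

(* Two parents of [x] would close a cycle through [x] along their ancestor
   chains, cut at the first common ancestor. *)
Lemma parent_unique x y1 y2 : x \in S -> y1 \in S -> y2 \in S ->
  adjB y1 x -> adjB y2 x -> (gd y1).+1 = gd x -> (gd y2).+1 = gd x -> y1 = y2.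
Proof.
move=> xS y1S y2S y1x y2x e1 e2; have [//|y12] := eqVneq y1 y2; case: acyclic.
have e12 : gd y2 = gd y1 by apply: succn_inj; rewrite e1 e2.
have [j [/andP [j_gt0 jh] abj ab_lt]] := ancestor_meet y1S y2S (esym e12) y12.
pose c i := if i <= j then ancestor i y1 else ancestor (j.*2 - i) y2.
have cP i : i <= j.*2 ->
    c i \in S /\ gd (c i) + (if i <= j then i else j.*2 - i) = gd y1.
  by rewrite /c; case: ifP => ij lti; [|rewrite -e12]; apply: ancestorP => //; lia.
have c_adj i : 0 <= i < 0 + j.*2 -> adjB (c i) (c i.+1).
  move=> /andP [_ lti]; rewrite /c; case: (ltnP i j) => [ltij|leji].
    by rewrite (ltnW ltij) ball_adj_sym; apply: ancestor_adj; lia.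
  case: ifP => [leij|_].
    rewrite (_ : i = j); last by apply/eqP; rewrite eqn_leq leij.
    rewrite abj (_ : j.*2 - j.+1 = j.-1); last by lia.
    by rewrite -{1}(prednK j_gt0); apply: ancestor_adj; lia.
  rewrite (_ : j.*2 - i = (j.*2 - i.+1).+1); last by lia.
  by apply: ancestor_adj; lia.
have c_inj : {in iota 0 j.*2.+1 &, injective c}.
  move=> i i'; rewrite !mem_iota !add0n !ltnS => lti lti' cii'.
  have [_ hi] := cP i lti; have [_ hi'] := cP i' lti'; rewrite cii' in hi.
  move: cii' hi hi'; rewrite /c; case: ifP => ij; case: ifP => i'j; try lia.
    move=> abi hi hi'; have ei : j.*2 - i' = i by lia.
    by move: abi; rewrite ei => /eqP; rewrite (negPf (ab_lt i _)) //; lia.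
  move=> bai hi hi'; have ei : j.*2 - i = i' by lia.
  by move: bai; rewrite ei => /esym/eqP; rewrite (negPf (ab_lt i' _)) //; lia.
have cS i : i \in iota 0 j.*2.+1 -> c i \in S.
  by rewrite mem_iota add0n ltnS => /cP [].
exists (x :: [seq c i | i <- iota 0 j.*2.+1]); split.
- rewrite cons_uniq map_inj_in_uniq ?iota_uniq // andbT.
  apply/mapP => -[i /[dup] /cS _ + xci]; rewrite mem_iota add0n ltnS.
  by move=> /cP [_]; rewrite -xci -e1; lia.
- by rewrite /= size_map size_iota; lia.
- by move=> z; rewrite inE => /predU1P [->|/mapP [i /cS ? ->]].
have [pc lc] := path_map_iota c_adj.
have c2j : c j.*2 = y2 by rewrite /c ifN ?subnn //; lia.
by rewrite /cycle /= rcons_path pc lc add0n c2j ball_adj_sym y1x y2x.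
Qed.

Lemma child_exists x : x \in S -> 0 < gd x -> 1 < tdeg adjB S x ->
  exists2 y, y \in S & adjB x y /\ gd y = (gd x).+1.
Proof.
move=> xS gx_gt0 degx; have [pS px ep] := parentP xS gx_gt0.
have : 0 < #|[set y in S | adjB x y] :\ parent x|.
  by move: degx; rewrite /tdeg (cardsD1 (parent x)) !inE pS ball_adj_sym px.
case/card_gt0P => y; rewrite !inE => /and3P [yp yS xy]; exists y => //.
have yx : adjB y x by rewrite ball_adj_sym.
have le_yx := gdist_adj (iffRL (reachable_ball x) xS) xy.
have le_xy := gdist_adj (iffRL (reachable_ball y) yS) yx.
have odd_xy := odd_gdist_adj xS yS xy; split=> //.
case: (ltngtP (gd y) (gd x)) => [ltyx|ltxy|exy].
- have eyx : (gd y).+1 = gd x by lia.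
  by rewrite (parent_unique xS yS pS yx px eyx ep) eqxx in yp.
- lia.
- by rewrite exy eqxx in odd_xy.
Qed.

(* Each [U]-vertex has a child (its degree is at least two) and distinct
   [U]-vertices have distinct children, none of which is the root. *)
Lemma card_inr_lt_inl k : 0 < k ->
  (forall x, x \in odd_vs adjB S (inl o) -> tdeg adjB S x = k.+1) ->
  #|[set u | inr u \in S]| < #|[set v | inl v \in S]|.
Proof.
move=> k_gt0 deg_odd.
pose is_child u v := [&& inl v \in S, adjB (inr u) (inl v)
                       & gd (inl v) == (gd (inr u)).+1].
have child_ex u : inr u \in S -> exists v, is_child u v.
  move=> uS; have odd_u : odd (gd (inr u)) by rewrite odd_gdist.
  have gu_gt0 : 0 < gd (inr u) by case: (gd _) odd_u.
  have deg_u : 1 < tdeg adjB S (inr u) by rewrite deg_odd ?ltnS // inE uS odd_u.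
  have [[v|u'] vS [uv ev]] := child_exists uS gu_gt0 deg_u.
    by exists v; rewrite /is_child vS uv ev eqxx.
  by have := odd_gdist vS; rewrite ev /= odd_u.
pose child u := odflt o [pick v | is_child u v].
have childP u : inr u \in S -> is_child u (child u).
  by move=> /child_ex [v cv]; rewrite /child; case: pickP => [//|/(_ v)]; rewrite cv.
have child_sub : child @: [set u | inr u \in S] \subset [set v | inl v \in S] :\ o.
  apply/subsetP => v /imsetP [u]; rewrite inE => /childP /and3P [vS _ ev] ->.
  by rewrite !inE vS andbT; apply: contra_eqN ev => /eqP ->; rewrite gdist_root.
have child_inj : {in [set u | inr u \in S] &, injective child}.
  move=> u1 u2; rewrite !inE => u1S u2S e12.
  have /and3P [c1S a1 /eqP e1] := childP u1 u1S.
  have /and3P [_ a2 /eqP e2] := childP u2 u2S; rewrite -e12 in a2 e2.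
  by case: (parent_unique c1S u1S u2S a1 a2 (esym e1) (esym e2)).
have := subset_leq_card child_sub; rewrite card_in_imset //.
by rewrite (cardsD1 o [set v | inl v \in S]) inE root_in_ball.
Qed.
End Ball.

Lemma mcount_gt0 (V U : finType) (adj : rel (V + U)) S o K q
    (g : 'I_q -> V) (h : 'I_q -> U) :
  injective g -> injective h -> (forall j, adj (inl (g j)) (inr (h j))) ->
  (forall v, inl v \in K :|: odd_vs adj S o -> v \in codom g) ->
  (forall u, inr u \in K :|: odd_vs adj S o -> u \in codom h) ->
  0 < mcount adj S o K.
Proof.
move=> ginj hinj gh_adj g_cov h_cov.
rewrite card_gt0; apply/set0Pn; exists [set (g j, h j) | j : 'I_q].
rewrite inE; apply/andP; split.
  apply/andP; split; first by apply/forall_inP => _ /imsetP [j _ ->]; apply: gh_adj.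
  apply/forall_inP => _ /imsetP [j _ ->]; apply/forall_inP => _ /imsetP [j' _ ->].
  apply/implyP => ne; have njj : j != j' by apply: contra ne => /eqP ->.
  by rewrite /= (inj_eq ginj) (inj_eq hinj) njj.
apply/forall_inP => -[v /g_cov /codomP [j ->] | u /h_cov /codomP [j ->]];
  by apply/exists_inP; exists (g j, h j); rewrite ?imset_f //= eqxx ?orbT.
Qed.

Local Open Scope ring_scope.

Lemma unitmx_perm_neq0 (F : fieldType) n (M : 'M[F]_n) :
  M \in unitmx -> exists s : 'S_n, forall i, M i (s i) != 0.
Proof.
rewrite unitmxE unitfE => detM.
have [s /prodf_neq0 Ms] : exists s : 'S_n, \prod_i M i (s i) != 0.
  apply/existsP; apply: contraR detM => /existsPn Ms0.
  by rewrite /determinant big1 // => s _; rewrite (eqP (negbNE (Ms0 s))) mulr0.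
by exists s => i; apply: Ms.
Qed.

Section FreeRows.
Variables (F : fieldType) (p q : nat) (A : 'M[F]_(p, q)).

Definition free_rows (R : {set 'I_p}) := forall y : 'rV_p,
  (forall i, i \notin R -> y 0 i = 0) -> y *m A = 0 -> y = 0.

Definition rowmask (R : {set 'I_p}) : 'M_(p, q) :=
  \matrix_(i, j) (if i \in R then A i j else 0).

Lemma row_rowmask (R : {set 'I_p}) i : i \in R -> row i (rowmask R) = row i A.
Proof. by move=> iR; apply/rowP => j; rewrite !mxE iR. Qed.

Lemma notin_rowmask (R : {set 'I_p}) i : ~~ (row i A <= rowmask R)%MS -> i \notin R.
Proof. by apply: contra => iR; rewrite -(row_rowmask iR) row_sub. Qed.

Lemma mul_rowmask (R : {set 'I_p}) y :
  y *m rowmask R = \row_i (if i \in R then y 0 i else 0) *m A.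
Proof.
apply/rowP => j; rewrite !mxE; apply: eq_bigr => i _; rewrite !mxE.
by case: (i \in R); rewrite ?mulr0 ?mul0r.
Qed.

Lemma free_rowsU1 (R : {set 'I_p}) i :
  free_rows R -> ~~ (row i A <= rowmask R)%MS -> free_rows (i |: R).
Proof.
move=> freeR iA y ys yA; have iR := notin_rowmask iA.
have [yi0|yi] := eqVneq (y 0 i) 0.
  apply: freeR => // x xR; have [->//|xi] := eqVneq x i.
  by apply: ys; rewrite in_setU1 negb_or xi.
case/negP: iA; set y' := \row_x (if x \in R then y 0 x else 0).
have ydec : y = y' + y 0 i *: 'e_i.
  apply/rowP => x; rewrite !mxE eqxx /=.
  have [->|xi] := eqVneq x i; first by rewrite (negPf iR) add0r mulr1.
  rewrite mulr0 addr0; case: ifP => // /negbT xR.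
  by apply: ys; rewrite in_setU1 negb_or xi.
have -> : row i A = (- (y 0 i)^-1 *: y') *m rowmask R.
  rewrite mul_rowmask.
  have -> : \row_x (if x \in R then (- (y 0 i)^-1 *: y') 0 x else 0)
            = - (y 0 i)^-1 *: y'.
    by apply/rowP => x; rewrite !mxE; case: (x \in R); rewrite ?mulr0.
  move: yA; rewrite {1}ydec mulmxDl -scalemxAl -rowE => /eqP; rewrite addr_eq0.
  move=> /eqP y'A; rewrite -scalemxAl y'A.
  by rewrite scaleNr scalerN opprK scalerA mulVf // scale1r.
exact: submxMl.
Qed.

Lemma free_rows_extend (R : {set 'I_p}) : free_rows R ->
  exists2 R' : {set 'I_p}, R \subset R' & free_rows R' /\ (A <= rowmask R')%MS.
Proof.
have [t] := ubnP (p - #|R|)%N; elim: t R => // t IH R ltRt freeR.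
have [spanR|/row_subPn [i iA]] := boolP (A <= rowmask R)%MS; first by exists R.
have iR := notin_rowmask iA.
have : (#|i |: R| <= #|'I_p|)%N by apply: max_card.
rewrite cardsU1 iR add1n card_ord => ltRp.
have [|R' RR' HR'] := IH (i |: R) _ (free_rowsU1 freeR iA).
  by rewrite cardsU1 iR add1n subnS -ltnS prednK // subn_gt0.
by exists R' => //; apply: subset_trans RR'; apply: subsetUr.
Qed.

Lemma free_rows_rowsub (R : {set 'I_p}) k (h : 'I_k -> 'I_p) :
  free_rows R -> injective h -> (forall l, h l \in R) -> row_free (rowsub h A).
Proof.
move=> freeR hinj hR; apply/inj_row_free => v.
rewrite rowsubE mulmxA => /freeR vh0.
have {}vh0 : v *m rowsub h 1%:M = 0.
  apply: vh0 => x xR; rewrite mxE big1 // => l _; rewrite !mxE.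
  by case: eqP => [hl|]; [rewrite -hl hR in xR | rewrite mulr0].
apply/rowP => l; have := congr1 (fun y : 'rV_p => y 0 (h l)) vh0.
rewrite !mxE (bigD1 l) //= big1 => [|l' nl']; last first.
  by rewrite !mxE (inj_eq hinj) (negPf nl') mulr0.
by rewrite !mxE eqxx mulr1 addr0.
Qed.

Hypothesis cols_free : forall c : 'cV_q, A *m c = 0 -> c = 0.

Lemma rank_cols_free : \rank A = q.
Proof.
rewrite -mxrank_tr; apply/eqP; apply: inj_row_free => v vA.
apply: trmx_inj; rewrite trmx0; apply: cols_free.
by rewrite -(trmxK A) -trmx_mul vA trmx0.
Qed.

Lemma card_spanning_free_rows (R : {set 'I_p}) :
  free_rows R -> (A <= rowmask R)%MS -> #|R| = q.
Proof.
move=> freeR spanR.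
have /eqP rkR := free_rows_rowsub freeR (@enum_val_inj _ _) (@enum_valP _ _).
apply/eqP; rewrite eqn_leq -{1}rkR rank_leq_col -{1}rank_cols_free -rkR.
apply/mxrankS/(submx_trans spanR)/row_subP => x.
have [xR|xR] := boolP (x \in R).
  by rewrite row_rowmask // -(enum_rankK_in xR xR) -row_rowsub row_sub.
by rewrite (_ : row x _ = 0) ?sub0mx //; apply/rowP => j; rewrite !mxE (negPf xR).
Qed.

(* A basis of rows containing [J] gives an invertible square submatrix;
   a nonzero term of its determinant is the transversal. *)
Lemma free_rows_transversal (J : {set 'I_p}) : free_rows J ->
  exists g : 'I_q -> 'I_p,
    [/\ injective g, forall j, A (g j) j != 0 & {subset J <= codom g}].
Proof.
move=> /free_rows_extend [R JR [freeR spanR]].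
have eqRq := card_spanning_free_rows freeR spanR.
pose h (j : 'I_q) : 'I_p := enum_val (cast_ord (esym eqRq) j).
have hinj : injective h by move=> j j' /enum_val_inj /cast_ord_inj.
have /unitmx_perm_neq0 [s As] : rowsub h A \in unitmx.
  by rewrite -row_free_unit (free_rows_rowsub freeR hinj) // => j; apply: enum_valP.
exists (h \o s^-1%g); split.
- by apply: inj_comp => //; apply: perm_inj.
- by move=> j; have := As (s^-1 j)%g; rewrite permKV mxE.
move=> x /(subsetP JR) xR.
have -> : x = (h \o s^-1%g) (s (cast_ord eqRq (enum_rank_in xR x))).
  by rewrite /= permK /h cast_ordK enum_rankK_in.
exact: codom_f.
Qed.

End FreeRows.

Section PrincipalMinor.
Variables (F : realFieldType) (n m : nat) (B : 'M[F]_(n, m)) (P : 'M[F]_m).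
Variable T : {set 'I_m}.
Hypotheses (PB : (P == B)%MS) (rkT : #|T| = \rank B).
Hypothesis detT : \det (principal_sub P T) != 0.

Let ev : 'I_#|T| -> 'I_m := @enum_val _ (mem T).

Lemma principal_subE : principal_sub P T = rowsub ev 1%:M *m P *m colsub ev 1%:M.
Proof.
by rewrite mulmx_colsub mulmx1 -rowsubE; apply/matrixP => i j; rewrite !mxE.
Qed.

Let principal_unit : principal_sub P T \in unitmx.
Proof. by rewrite unitmxE unitfE. Qed.

Lemma cols_free_on_T (c : 'cV[F]_m) :
  (forall j, j \notin T -> c j 0 = 0) -> B *m c = 0 -> c = 0.
Proof.
move=> cT Bc; pose cT' := rowsub ev c.
have cE : c = colsub ev 1%:M *m cT'.
  apply/matrixP => x j; rewrite (ord1 j) mxE.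
  have [xT|xT] := boolP (x \in T); last first.
    rewrite cT // big1 // => l _; rewrite !mxE.
    by case: eqP => [exl|]; [rewrite exl enum_valP in xT | rewrite mul0r].
  rewrite (bigD1 (enum_rank_in xT x)) //= big1 => [|l nl]; rewrite !mxE.
    by rewrite /ev enum_rankK_in // eqxx mul1r addr0.
  rewrite -{1}(enum_rankK_in xT xT) /ev (inj_eq enum_val_inj) eq_sym.
  by rewrite (negPf nl) mul0r.
have [X PX] := submxP (proj1 (andP PB)).
have : principal_sub P T *m cT' = 0.
  by rewrite principal_subE -!mulmxA -cE PX -mulmxA Bc !mulmx0.
by move=> PcT; rewrite cE -(mulKmx principal_unit cT') PcT !mulmx0.
Qed.

Lemma rowspace_eq0_on_T (y : 'rV[F]_n) :
  (forall j, j \in T -> (y *m B) 0 j = 0) -> y *m B = 0.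
Proof.
move=> yBT.
have yBT0 : y *m B *m colsub ev 1%:M = 0.
  rewrite mulmx_colsub mulmx1; apply/rowP => l; rewrite [LHS]mxE [RHS]mxE.
  by rewrite yBT ?enum_valP.
have PT : (P <= rowsub ev 1%:M *m P)%MS.
  have rkPT : \rank (principal_sub P T) = #|T|.
    by apply/eqP; move: principal_unit; rewrite -row_full_unit.
  rewrite -(mxrank_leqif_sup (submxMl _ P)).2 eqn_leq mxrankS ?submxMl //=.
  by rewrite (eqmx_rank PB) -rkT -{1}rkPT principal_subE mxrankM_maxl.
have [a wa] := submxP (submx_trans (submx_trans (submxMl y B) (proj2 (andP PB))) PT).
have aPT : a *m principal_sub P T = 0.
  by rewrite principal_subE !mulmxA -(mulmxA a) -wa.
by rewrite wa -(mulmxK principal_unit a) aPT !mul0mx.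
Qed.

End PrincipalMinor.

Lemma signed_adj_neq0 (F : realFieldType) n m (E : 'I_n -> 'I_m -> bool) B :
  signed_adj E B -> forall i j, (B i j != 0 :> F) = E i j.
Proof.
move=> sB i j; have := sB i j; case: (E i j) => [[]->|->].
- by rewrite oner_eq0.
- by rewrite oppr_eq0 oner_eq0.
- by rewrite eqxx.
Qed.

Section SparseKernel.
Variables (F : fieldType) (n m d : nat) (E : 'I_n -> 'I_m -> bool).
Variable B : 'M[F]_(n, m).
Hypothesis B_neq0 : forall i j, (B i j != 0) = E i j.
Hypothesis C4free : forall v1 v2, v1 != v2 -> (#|[set u | E v1 u && E v2 u]| <= 1)%N.
Hypothesis deg_d : forall v, #|[set u | E v u]| = d.

(* If [y B = 0] and [y v != 0], every one of the [d] neighbours [u] of [v] has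
   a second neighbour [i] with [y i != 0]; by C4-freeness [u |-> i] is
   injective, so the support of [y] has more than [d] elements. *)
Lemma free_rows_small (J : {set 'I_n}) : (#|J| <= d)%N -> free_rows B J.
Proof.
move=> Jd y yJ yB; apply/rowP => v; rewrite mxE; apply/eqP/negPn/negP => yv.
have vJ : v \in J by apply: contraR yv => /yJ ->.
pose Q u i := [&& i != v, y 0 i != 0 & E i u].
have Q_ex u : E v u -> exists i, Q u i.
  move=> Evu; have : (y *m B) 0 u = 0 by rewrite yB mxE.
  rewrite mxE (bigD1 v) //=; case: (pickP (Q u)) => [i Qi|noQ]; first by exists i.
  rewrite big1 ?addr0 => [/eqP|i iv].
    by rewrite mulf_eq0 (negPf yv) /= -[_ == 0]negbK B_neq0 Evu.
  have := noQ i; rewrite /Q iv /=; have [->|_] := eqVneq (y 0 i) 0.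
    by rewrite mul0r.
  by move/negbT; rewrite -B_neq0 negbK => /eqP ->; rewrite mulr0.
pose phi u := odflt v [pick i | Q u i].
have phiP u : E v u -> Q u (phi u).
  move=> /Q_ex [i Qi]; rewrite /phi; case: pickP => [//|/(_ i)].
  by rewrite Qi.
have phi_sub : phi @: [set u | E v u] \subset J :\ v.
  apply/subsetP => x /imsetP [u]; rewrite inE => /phiP /and3P [iv yi _] ->.
  by rewrite !inE iv; apply: contraR yi => /yJ ->.
have phi_inj : {in [set u | E v u] &, injective phi}.
  move=> u1 u2; rewrite !inE => E1 E2 e; apply/eqP/negP => /negP ne.
  have /and3P [iv _ Ei1] := phiP u1 E1; have /and3P [_ _ Ei2] := phiP u2 E2.
  rewrite -e in Ei2.
  have : [set u1; u2] \subset [set u | E v u && E (phi u1) u].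
    by apply/subsetP => x; rewrite !inE => /orP [] /eqP ->; apply/andP.
  move/subset_leq_card; rewrite cards2 ne => /leq_trans/(_ (C4free _)).
  by rewrite eq_sym => /(_ iv).
have := subset_leq_card phi_sub; rewrite card_in_imset // deg_d => dJv.
by move: Jd; rewrite (cardsD1 v J) vJ add1n ltnNge dJv.
Qed.

End SparseKernel.

Lemma detmeas_gt0 (F : realFieldType) n m (B : 'M[F]_(n, m)) P T :
  0 < detmeas B P T -> #|T| = \rank B /\ \det (principal_sub P T) != 0.
Proof. by rewrite /detmeas; case: eqP => [eT /lt0r_neq0|_]; rewrite ?ltxx. Qed.

Section BallMatrix.
Variables (F : realFieldType) (n m d : nat) (E : 'I_n -> 'I_m -> bool).
Variables (B : 'M[F]_(n, m)) (P : 'M[F]_m) (T : {set 'I_m}) (o : 'I_n) (r : nat).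
Hypothesis B_neq0 : forall i j, (B i j != 0) = E i j.
Hypothesis C4free :
  forall v1 v2, v1 != v2 -> (#|[set u | E v1 u && E v2 u]| <= 1)%N.
Hypothesis deg_d : forall v, #|[set u | E v u]| = d.
Hypotheses (PB : (P == B)%MS) (rkT : #|T| = \rank B).
Hypothesis detT : \det (principal_sub P T) != 0.

Local Notation adjB := (ball_adj E T o r).
Local Notation S := (ball_vs E T o r).
Local Notation gd := (gdist adjB (inl o)).

Let UB := [set u | inr u \in S].
Let eu : 'I_#|UB| -> 'I_m := enum_val.
Let A := colsub eu B.

Let UB_T u : u \in UB -> u \in T.
Proof. by rewrite inE => /nball_adj_sub_inr. Qed.

Lemma ball_cols_free (c : 'cV_#|UB|) : A *m c = 0 -> c = 0.
Proof.
move=> Ac; have c0 : colsub eu 1%:M *m c = 0.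
  apply: (cols_free_on_T PB detT) => [j jT|].
    rewrite mxE big1 // => l _; rewrite !mxE.
    by case: eqP => [ejl|]; [rewrite ejl UB_T ?enum_valP in jT | rewrite mul0r].
  by rewrite mulmxA mulmx_colsub mulmx1.
apply/matrixP => l j; rewrite (ord1 j) [RHS]mxE.
have := congr1 (fun w : 'cV_m => w (eu l) 0) c0.
rewrite !mxE (bigD1 l) //= big1 ?addr0 => [|l' nl']; rewrite !mxE.
  by rewrite eqxx mul1r.
by rewrite (inj_eq enum_val_inj) eq_sym (negPf nl') mul0r.
Qed.

Lemma ball_free_rows (J : {set 'I_n}) :
  (forall i, i \in J -> inl i \in S /\ (gd (inl i) < r)%N) -> (#|J| <= d)%N ->
  free_rows A J.
Proof.
move=> J_low Jd y yJ yA; apply: (free_rows_small B_neq0 C4free deg_d Jd yJ).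
(* Outside [UB], [y *m B] vanishes: the rows in [J] have all their
   neighbours inside the ball. *)
apply: (rowspace_eq0_on_T PB rkT detT) => u uT.
have [uU|uU] := boolP (u \in UB).
  have := congr1 (fun w : 'rV_#|UB| => w 0 (enum_rank_in uU u)) yA.
  by rewrite mulmx_colsub !mxE /eu enum_rankK_in.
rewrite mxE big1 // => i _.
have [->|yi] := eqVneq (y 0 i) 0; first by rewrite mul0r.
have iJ : i \in J by apply: contraR yi => /yJ ->.
have [iS ltir] := J_low i iJ.
have [->|Biu] := eqVneq (B i u) 0; first by rewrite mulr0.
by case/negP: uU; rewrite inE (ball_nbr iS ltir) //= -B_neq0 Biu uT.
Qed.

Lemma ball_transversal (J : {set 'I_n}) :
  (forall i, i \in J -> inl i \in S /\ (gd (inl i) < r)%N) -> (#|J| <= d)%N ->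
  exists g : 'I_#|UB| -> 'I_n,
    [/\ injective g, forall j, E (g j) (eu j) & {subset J <= codom g}].
Proof.
move=> J_low Jd.
have [g [ginj gA gJ]] := free_rows_transversal ball_cols_free (ball_free_rows J_low Jd).
by exists g; split=> // j; have := gA j; rewrite mxE B_neq0.
Qed.

Variable k : nat.
Hypothesis k_gt0 : (0 < k)%N.
Hypothesis acyclic : ~ has_cycle adjB S.
Hypothesis deg_odd : forall x, x \in odd_vs adjB S (inl o) -> tdeg adjB S x = k.+1.
Hypothesis even_lt_d : (#|even_vs adjB S (inl o)| < d)%N.

Lemma ball_height : theight adjB S (inl o) = r.
Proof.
apply/eqP; rewrite eqn_leq theight_ball_le leqNgt; apply/negP => lt_hr.
pose VB := [set v | inl v \in S].
have VB_low i : i \in VB -> inl i \in S /\ (gd (inl i) < r)%N.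
  by rewrite inE => iS; split=> //; apply: leq_ltn_trans lt_hr; apply: leq_bigmax_cond.
have VBd : (#|VB| <= d)%N.
  by apply/ltnW/leq_ltn_trans/even_lt_d/card_even_vs_ge => v; rewrite inE.
have [g [ginj _ VBg]] := ball_transversal VB_low VBd.
have : (#|VB| <= #|UB|)%N.
  by rewrite -[X in (_ <= X)%N]card_ord -(card_codom ginj); apply/subset_leq_card/subsetP.
by rewrite leqNgt (card_inr_lt_inl acyclic k_gt0 deg_odd).
Qed.

Lemma ball_mcount_gt0 : ~~ odd r ->
  (0 < mcount adjB S (inl o) (I_vs adjB S (inl o)))%N.
Proof.
move=> r_even; pose J := [set v | inl v \in I_vs adjB S (inl o)].
have J_low i : i \in J -> inl i \in S /\ (gd (inl i) < r)%N.
  by rewrite !inE ball_height => /andP [/andP [-> _]].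
have Jd : (#|J| <= d)%N.
  by apply/ltnW/leq_ltn_trans/even_lt_d/card_even_vs_ge => v /J_low [].
have [g [ginj gE gJ]] := ball_transversal J_low Jd.
apply: (mcount_gt0 ginj (@enum_val_inj _ _)) => [j|v|u].
- have uS : inr (eu j) \in S by have := enum_valP j; rewrite inE.
  have lt_ur : (gd (inr (eu j)) < r)%N.
    rewrite ltn_neqAle gdist_ball_le // andbT.
    by apply: contraNneq r_even => <-; rewrite odd_gdist.
  have Egu : adj_sub E T (inl (g j)) (inr (eu j)) by rewrite /= gE UB_T ?enum_valP.
  by rewrite /ball_adj Egu uS (ball_nbr uS lt_ur) // adj_sub_sym.
- rewrite inE => /orP [vI|]; first by apply: gJ; rewrite inE.
  by rewrite inE => /andP [vS]; rewrite odd_gdist.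
- rewrite !inE => /orP [/andP [/andP [uS]]|/andP [uS _]]; first by rewrite odd_gdist.
  have uU : u \in UB by rewrite inE.
  by rewrite -(enum_rankK_in uU uU) codom_f.
Qed.

End BallMatrix.

Theorem lemma2p9 (R : realFieldType) (k d n m : nat)
  (E : 'I_n -> 'I_m -> bool) (B : 'M[R]_(n, m)) (P : 'M[R]_m)
  (r : nat) (T : {set 'I_m}) (o : 'I_n) :
  (1 <= k)%N -> (0 < d)%N ->
  (forall v1 v2, v1 != v2 -> #|[set u | E v1 u && E v2 u]| <= 1)%N ->
  (forall u1 u2, u1 != u2 -> #|[set v | E v u1 && E v u2]| <= 1)%N ->
  (forall v, #|[set u | E v u]| = d) ->
  (forall u, #|[set v | E v u]| = k.+1) ->
  signed_adj E B ->
  orth_proj_rowspace B P ->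
  ~~ odd r ->
  0 < detmeas B P T ->
  valid_tree k (ball_adj E T o r) (ball_vs E T o r) (inl o) ->
  (#|even_vs (ball_adj E T o r) (ball_vs E T o r) (inl o)| < d)%N ->
  theight (ball_adj E T o r) (ball_vs E T o r) (inl o) = r /\
  (0 < mcount (ball_adj E T o r) (ball_vs E T o r) (inl o)
         (I_vs (ball_adj E T o r) (ball_vs E T o r) (inl o)))%N.
Proof.
move=> k_gt0 _ C4free _ deg_d _ sB [_ _ PB] r_even /detmeas_gt0 [rkT detT].
move=> [[_ _ acyclic] _ deg_odd] even_lt_d.
have B_neq0 := signed_adj_neq0 sB.
split.
  exact: (ball_height B_neq0 C4free deg_d PB rkT detT k_gt0 acyclic deg_odd
            even_lt_d).
exact: (ball_mcount_gt0 B_neq0 C4free deg_d PB rkT detT k_gt0 acyclic deg_odd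
          even_lt_d r_even).
Qed.
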